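(* For every standard allocation rule $f$, the mechanism $\mathrm{Truthful}(f)$ is individually rational, truthful and budget feasible. Precisely, for every instance and every seller $i$: (a) $P_{i,r_i}(c_i)\ge c_if_{r_i}(c_i/u_i)$; (b) for every report $\bar c_i\ge0$, $P_{i,r_i}(\bar c_i)-c_if_{r_i}(\bar c_i/u_i)\le P_{i,r_i}(c_i)-c_if_{r_i}(c_i/u_i)$, where $r_i$ depends only on the other sellers' costs; and (c) $\sum_{i\in S}P_{i,r_i}(c_i)\le B$.
   Context: Setting: a buyer with budget $B>0$ faces a finite set $S$ of sellers; seller $i$ owns one divisible item giving utility $u_i>0$ and has private cost $c_i\ge0$; buying fraction $x_i\in[0,1]$ costs $x_ic_i$. A standard allocation rule is a non-increasing $f:[0,\infty)\to[0,1]$ with $f(0)=1$, $f(e-1)=0$. For $r>0$: $f_r(x)=f(x/r)$, $Q_r(x)=xf_r(x)+\int_x^\infty f_r(y)\,dy$, $P_{i,r}(x)=u_iQ_r(x/u_i)$. $\mathrm{EnvyFree}(f)$ on cost vector $c$ has stopping rate the value at which, decreasing $r$ from $\infty$, the nondecreasing function $r\mapsto\sum_iP_{i,r}(c_i)$ first equals $B$. $\mathrm{Truthful}(f)$ on reported costs $c$: for each $i$, $r_i$ is the stopping rate of $\mathrm{EnvyFree}(f)$ on the cost vector obtained from $c$ by setting the $i$-th cost to $0$ (so $r_i$ does not depend on $i$'s report); it buys $f_{r_i}(c_i/u_i)$ of item $i$ and pays $P_{i,r_i}(c_i)$ to seller $i$. *)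

From HB Require Import structures.
From mathcomp Require Import all_boot all_order all_algebra.
From mathcomp Require Import all_classical all_reals all_analysis.
Set Implicit Arguments. Unset Strict Implicit. Unset Printing Implicit Defensive.
Import Order.TTheory GRing.Theory Num.Theory.
Import numFieldNormedType.Exports.
Local Open Scope classical_set_scope.
Local Open Scope ring_scope.

Section Defs.
Variable R : realType.

(* standard allocation rule: f : [0,oo) -> [0,1] non-increasing, f 0 = 1,
   f (e - 1) = 0.  Values of f on negative arguments are irrelevant. *)
Definition std_alloc (f : R -> R) : Prop :=
  [/\ (forall x, 0 <= x -> 0 <= f x <= 1),
      (forall x y, 0 <= x -> x <= y -> f y <= f x),
      f 0 = 1 & f (expR 1 - 1) = 0].

Definition fr (f : R -> R) (r : R) (x : R) : R := f (x / r).

Definition Q (f : R -> R) (r x : R) : R :=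
  x * fr f r x + Rintegral lebesgue_measure `[x, +oo[ (fr f r).

Definition P (f : R -> R) (ui r x : R) : R := ui * Q f r (x / ui).

Definition total_pay (f : R -> R) (I : finType) (u c : I -> R) (r : R) : R :=
  \sum_(i : I) P f (u i) r (c i).

(* stopping rate of EnvyFree(f) on cost vector c: decreasing r from +oo,
   the first value at which total_pay equals B, i.e. the largest r > 0
   with total_pay r = B. *)
Definition stopping_rate (f : R -> R) (I : finType) (u c : I -> R) (B r : R)
  : Prop :=
  0 < r /\ total_pay f u c r = B /\
  (forall r', r < r' -> total_pay f u c r' <> B).

Definition zero_at (I : finType) (c : I -> R) (i : I) : I -> R :=
  fun j => if j == i then 0 else c j.

End Defs.

From HB Require Import structures.
From mathcomp Require Import all_boot all_order all_algebra.
From mathcomp Require Import all_classical all_reals all_analysis.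
From mathcomp Require Import measurable_realfun ring lra.
Set Implicit Arguments. Unset Strict Implicit. Unset Printing Implicit Defensive.
Import Order.TTheory GRing.Theory Num.Theory.
Import numFieldNormedType.Exports.
Local Open Scope classical_set_scope.
Local Open Scope ring_scope.

(** Write [g = f_r] and [T a = \int_a^oo g], so that [Q_r a = a g a + T a].
    A seller with true normalized cost [a] who reports [x] gets utility
    [u ((x - a) g x + T x)], and [(x - a) g x + T x <= T a] because [g] is
    non-increasing: the rectangle [(x - a) g x] is dominated by the integral
    of [g] between [a] and [x], whichever side of [a] the report lies on.
    Taking [x = a] gives individual rationality, and [x = 0] shows that [Q_r]
    is largest at cost 0.  Since [f_r] grows with [r], so does [P_{i,r}]; for
    the seller [j] with the largest threshold rate, the payments are thus
    bounded termwise by those of EnvyFree at rate [r_j] on [c] with [c_j]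
    set to 0, whose total is [B]. *)

Section TailIntegral.
Variable R : realType.
Notation mu := (@lebesgue_measure R).
Variables (g : R -> R) (M : R).
Hypothesis g_ge0_le1 : forall y, 0 <= y -> 0 <= g y <= 1.
Hypothesis g_nonincr : forall y z, 0 <= y -> y <= z -> g z <= g y.
Hypothesis g_eq0 : forall y, M <= y -> g y = 0.

Definition tail_integral (a : R) := Rintegral mu `[a, +oo[ g.

Lemma measurable_fun_nonneg_dom (D : set R) : measurable D ->
  (forall y, D y -> 0 <= y) -> measurable_fun D g.
Proof.
move=> mD D0.
apply: (@eq_measurable_fun _ _ _ _ D (fun y => g (Num.max y 0))).
  by move=> y /[!inE] /D0 y0; rewrite max_l.
apply: nonincreasing_measurable => // y z yz.
apply: g_nonincr; first by rewrite le_max lexx orbT.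
by rewrite le_max2 ?lexx.
Qed.

(* [g] is dominated by the indicator of [[0, M]]. *)
Lemma integrable_nonneg_dom (D : set R) : measurable D ->
  (forall y, D y -> 0 <= y) -> mu.-integrable D (EFin \o g).
Proof.
move=> mD D0.
apply: (@le_integrable _ _ _ mu D mD _ (EFin \o (\1_`[0, M] : R -> R))).
- by apply/measurable_EFinP; apply: measurable_fun_nonneg_dom.
- move=> y Dy /=; rewrite /indic lee_fin; have y0 := D0 _ Dy.
  have /andP[g0 g1] := g_ge0_le1 y0.
  case: (leP y M) => yM.
    rewrite mem_set /=; last by rewrite in_itv /= y0 yM.
    by rewrite normr1 ger0_norm.
  rewrite memNset /=; last by rewrite in_itv /= y0 /= leNgt yM.
  by rewrite normr0 g_eq0 ?normr0 // ltW.
- apply/integrableP; split.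
    by apply/measurable_EFinP; apply: measurable_indic.
  under eq_integral do rewrite /= ger0_norm ?indic_ge0 //.
  rewrite integral_indic //.
  apply: (le_lt_trans (measureIl _ _ _)) => //.
  rewrite /= lebesgue_measure_itv.
  by case: ifP => _; rewrite ?ltry.
Qed.

Lemma tail_integral_ge0 a : 0 <= a -> 0 <= tail_integral a.
Proof.
move=> a0; apply: Rintegral_ge0 => y /=; rewrite in_itv /= andbT => ay.
by have /andP[] := g_ge0_le1 (le_trans a0 ay).
Qed.

Lemma tail_integralB a x : 0 <= a -> a <= x ->
  tail_integral a - tail_integral x = Rintegral mu `[a, x] g.
Proof.
move=> a0 ax; rewrite /tail_integral.
have itvB := @Rintegral_itvB R g (BLeft a) (BInfty _ false) x.
rewrite (@Rintegral_itv_obnd_cbnd R x) in itvB; last first.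
  apply: integrable_nonneg_dom => // y /=; rewrite in_itv /= andbT.
  by move/ltW; exact: le_trans (le_trans a0 ax).
rewrite -itvB ?bnd_simp //; first lra.
by apply: integrable_nonneg_dom => // y /=; rewrite in_itv /= andbT; exact: le_trans.
Qed.

Lemma Rintegral_itv_nonincr_bounds a x : 0 <= a -> a <= x ->
  (x - a) * g x <= Rintegral mu `[a, x] g <= (x - a) * g a.
Proof.
move=> a0 ax.
have D0 y : `[a, x]%classic y -> 0 <= y.
  by rewrite /= in_itv /= => /andP[ay _]; exact: le_trans ay.
have icst k : mu.-integrable `[a, x]%classic (EFin \o (fun=> k)).
  apply/integrableP; split; first exact: measurable_cst.
  rewrite integral_cst //= lebesgue_measure_itv.
  by case: ifP => _; rewrite ?mule0 ?ltry // -EFinM ltry.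
have mu_ax : fine (mu `[a, x]) = x - a.
  rewrite /= lebesgue_measure_itv; case: ifPn => //.
  rewrite lte_fin -leNgt => xa.
  by rewrite (@le_anti _ _ x a) ?xa ?ax // subrr.
apply/andP; split; rewrite mulrC -mu_ax -Rintegral_cst //;
  apply: le_Rintegral => //; try exact: integrable_nonneg_dom;
  move=> y /=; rewrite in_itv /= => /andP[ay yx]; apply: g_nonincr => //.
exact: le_trans ay.
Qed.

Lemma tail_integral_exchange a x : 0 <= a -> 0 <= x ->
  (x - a) * g x + tail_integral x <= tail_integral a.
Proof.
move=> a0 x0; case: (leP a x) => ax.
  have := tail_integralB a0 ax.
  have /andP[+ _] := Rintegral_itv_nonincr_bounds a0 ax; lra.
have xa := ltW ax.
have := tail_integralB x0 xa.
have /andP[_ +] := Rintegral_itv_nonincr_bounds x0 xa; lra.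
Qed.

End TailIntegral.

Section StandardAllocation.
Variable R : realType.
Variable f : R -> R.
Hypothesis hf : std_alloc f.

Lemma expR1B1_ge0 : 0 <= expR 1 - 1 :> R.
Proof. have := expR_ge1Dx (1 : R); lra. Qed.

Lemma fr_le (r r' y : R) : 0 < r -> r <= r' -> 0 <= y -> fr f r y <= fr f r' y.
Proof.
move=> r0 rr' y0; case: hf => _ f_nonincr _ _; apply: f_nonincr.
  by rewrite divr_ge0 // ltW // (lt_le_trans r0).
by rewrite ler_wpM2l // lef_pV2 ?posrE // (lt_le_trans r0).
Qed.

Section FixedRate.
Variable r : R.
Hypothesis r_gt0 : 0 < r.

Lemma fr_ge0_le1 y : 0 <= y -> 0 <= fr f r y <= 1.
Proof. by case: hf => f01 _ _ _ y0; apply: f01; rewrite divr_ge0 // ltW. Qed.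

Lemma fr_nonincr y z : 0 <= y -> y <= z -> fr f r z <= fr f r y.
Proof.
case: hf => _ f_nonincr _ _ y0 yz; apply: f_nonincr.
  by rewrite divr_ge0 // ltW.
by rewrite ler_pM2r // invr_gt0.
Qed.

Lemma fr_eq0 y : r * (expR 1 - 1) <= y -> fr f r y = 0.
Proof.
case: hf => f01 f_nonincr _ fe yM.
have M0 : 0 <= r * (expR 1 - 1) by rewrite mulr_ge0 ?ltW ?expR1B1_ge0.
apply/le_anti/andP; split; last first.
  by have /andP[] := f01 (y / r) (divr_ge0 (le_trans M0 yM) (ltW r_gt0)).
rewrite /fr -fe; apply: f_nonincr; first exact: expR1B1_ge0.
by rewrite ler_pdivlMr // mulrC.
Qed.

Let T := tail_integral (fr f r).

Lemma P_sub_costE (u c x : R) : u != 0 ->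
  P f u r x - c * fr f r (x / u) = u * ((x / u - c / u) * fr f r (x / u) + T (x / u)).
Proof.
move=> u0; rewrite /P /Q /T /tail_integral -{1}(divfK u0 c).
by move: (c / u) (x / u) => b a; ring.
Qed.

Lemma P_utility_le (u c x : R) : 0 < u -> 0 <= c -> 0 <= x ->
  P f u r x - c * fr f r (x / u) <= P f u r c - c * fr f r (c / u).
Proof.
move=> u0 c0 x0; rewrite !P_sub_costE ?gt_eqF // subrr mul0r add0r.
apply: ler_wpM2l; first exact: ltW.
by apply: (tail_integral_exchange fr_ge0_le1 fr_nonincr fr_eq0);
  rewrite divr_ge0 // ltW.
Qed.

Lemma P_ge_cost (u c : R) : 0 < u -> 0 <= c -> c * fr f r (c / u) <= P f u r c.
Proof.
move=> u0 c0; rewrite -subr_ge0 P_sub_costE ?gt_eqF // subrr mul0r add0r.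
apply: mulr_ge0; first exact: ltW.
by apply: (tail_integral_ge0 fr_ge0_le1); rewrite divr_ge0 // ltW.
Qed.

Lemma P_le_P0 (u c : R) : 0 < u -> 0 <= c -> P f u r c <= P f u r 0.
Proof. by move=> u0 c0; have := P_utility_le u0 (lexx 0) c0; rewrite !mul0r !subr0. Qed.

End FixedRate.

Lemma P_le_rate (u x r r' : R) : 0 < u -> 0 <= x -> 0 < r -> r <= r' ->
  P f u r x <= P f u r' x.
Proof.
move=> u0 x0 r0 rr.
have r'0 : 0 < r' by exact: lt_le_trans rr.
have a0 : 0 <= x / u by rewrite divr_ge0 // ltW.
have dom_ge0 y : `[x / u, +oo[%classic y -> 0 <= y.
  by rewrite /= in_itv /= andbT; exact: le_trans.
rewrite /P /Q; apply: ler_wpM2l; first exact: ltW.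
apply: lerD; first by apply: ler_wpM2l => //; exact: fr_le.
apply: le_Rintegral => //.
- by apply: (integrable_nonneg_dom (fr_ge0_le1 r0) (fr_nonincr r0) (fr_eq0 r0)).
- by apply: (integrable_nonneg_dom (fr_ge0_le1 r'0) (fr_nonincr r'0) (fr_eq0 r'0)).
by move=> y /dom_ge0; exact: fr_le.
Qed.

Lemma sum_P_le_total_pay (I : finType) (u c r : I -> R) j :
  (forall i, 0 < u i) -> (forall i, 0 <= c i) -> (forall i, 0 < r i) ->
  (forall i, r i <= r j) ->
  \sum_i P f (u i) (r i) (c i) <= total_pay f u (zero_at c j) (r j).
Proof.
move=> u0 c0 r0 r_le; apply: ler_sum => i _.
apply: (le_trans (P_le_rate _ _ _ (r_le i))) => //.
by rewrite /zero_at; case: eqP => [->|_] //; exact: P_le_P0.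
Qed.

End StandardAllocation.

Theorem lemma2 (R : realType) (f : R -> R) (I : finType) (B : R)
  (u c : I -> R) (r : I -> R) :
  std_alloc f -> 0 < B ->
  (forall i, 0 < u i) -> (forall i, 0 <= c i) ->
  (forall i, stopping_rate f u (zero_at c i) B (r i)) ->
  [/\ (forall i, c i * fr f (r i) (c i / u i) <= P f (u i) (r i) (c i)),
      (forall i (cb : R), 0 <= cb ->
         P f (u i) (r i) cb - c i * fr f (r i) (cb / u i)
         <= P f (u i) (r i) (c i) - c i * fr f (r i) (c i / u i))
    & \sum_(i : I) P f (u i) (r i) (c i) <= B].
Proof.
move=> hf B0 u0 c0 hr.
have r0 i : 0 < r i by case: (hr i).
split=> [i|i cb cb0|]; first exact: P_ge_cost.
  exact: P_utility_le.
case: (pickP (fun _ : I => true)) => [i0 _|I_empty].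
  have [j _ r_le] := @arg_maxP _ _ I i0 predT r isT.
  have [_ [<- _]] := hr j.
  by apply: sum_P_le_total_pay => // i; apply: r_le.
by rewrite big_pred0 // ltW.
Qed.
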